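(* Let $q\geqslant 2$ be an integer. For $j=1,2$ let $\mathscr T_j=(V_j,\mathcal E_j)$ be a leafless, locally finite rooted directed tree with root $\mathsf{root}_j$, let $S^{(j)}_{\lambda,q}$ be the Dirichlet shift on $\mathscr T_j$, let $V^{(j)}_{\prec}$ be the set of branching vertices of $\mathscr T_j$, and let $\mathcal G^{(j)}_n:=\mathsf{Chi}^{\langle n\rangle}(\mathsf{root}_j)$ (the vertices of depth $n$ in $\mathscr T_j$), $n\in\mathbb N$. Then $S^{(1)}_{\lambda,q}$ is unitarily equivalent to $S^{(2)}_{\lambda,q}$ if and only if for every $n\in\mathbb N$, $$\sum_{v\in V^{(1)}_{\prec}\cap\mathcal G^{(1)}_n}\big(\mathrm{card}(\mathsf{Chi}(v))-1\big)=\sum_{v\in V^{(2)}_{\prec}\cap\mathcal G^{(2)}_n}\big(\mathrm{card}(\mathsf{Chi}(v))-1\big).$$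
   Context: A directed tree $\mathscr T=(V,\mathcal E)$ is a directed graph ($\mathcal E\subseteq V\times V$ without loops) with no circuits, which is connected and in which every vertex other than a root has a unique parent; it is rooted if it has a unique vertex $\mathsf{root}$ with no parent. For $v\in V$, $\mathsf{Chi}(v)=\{u:(v,u)\in\mathcal E\}$, and $\mathsf{Chi}^{\langle 0\rangle}(W)=W$, $\mathsf{Chi}^{\langle n\rangle}(W)=\bigcup_{u\in \mathsf{Chi}^{\langle n-1\rangle}(W)}\mathsf{Chi}(u)$. The tree is locally finite if every $\mathsf{Chi}(v)$ is finite, leafless if every $\mathsf{Chi}(v)$ is nonempty; $V$ is assumed countably infinite. The depth $n_v$ of $v$ is the unique $n$ with $v\in\mathsf{Chi}^{\langle n\rangle}(\mathsf{root})$. The set of branching vertices is $V_\prec=\{v\in V:\mathrm{card}(\mathsf{Chi}(v))\geqslant 2\}$. On $\ell^2(V)$ with orthonormal basis $\{e_u\}_{u\in V}$, the weighted shift with weights $\{\lambda_u\}_{u\ne\mathsf{root}}$ is the operator $S_\lambda e_v=\sum_{u\in\mathsf{Chi}(v)}\lambda_u e_u$. For real $q\geqslant 1$, the Dirichlet shift $S_{\lambda,q}$ on $\mathscr T$ is the (bounded) weighted shift with weights $\lambda_{u,q}=\frac{1}{\sqrt{\mathrm{card}(\mathsf{Chi}(v))}}\sqrt{\frac{n_v+q}{n_v+1}}$ for $u\in\mathsf{Chi}(v)$, $v\in V$. *)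

From Stdlib Require Import Reals List Relations ClassicalEpsilon.
Import ListNotations.
Open Scope R_scope.

Record C := mkC { Cre : R; Cim : R }.
Definition C0 : C := mkC 0 0.
Definition Cadd (z w : C) : C := mkC (Cre z + Cre w) (Cim z + Cim w).
Definition Cmul (z w : C) : C :=
  mkC (Cre z * Cre w - Cim z * Cim w) (Cre z * Cim w + Cim z * Cre w).
Definition Cscale (r : R) (z : C) : C := mkC (r * Cre z) (r * Cim z).
Definition Cnorm2 (z : C) : R := Cre z * Cre z + Cim z * Cim z.

Section Trees.
Context {V : Type} (E : V -> V -> Prop).

Fixpoint epath (v0 : V) (l : list V) : Prop :=
  match l with
  | [] => True
  | v1 :: l' => E v0 v1 /\ epath v1 l'
  end.

Definition has_circuit : Prop :=
  exists (v0 : V) (l : list V),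
    NoDup (v0 :: l) /\ l <> [] /\ epath v0 l /\ E (last l v0) v0.

Definition connected : Prop :=
  forall u v : V, clos_refl_sym_trans V E u v.

Definition rooted_directed_tree (root : V) : Prop :=
  (forall v, ~ E v v) /\
  ~ has_circuit /\
  connected /\
  (forall u, ~ E u root) /\
  (forall v, v <> root -> exists! u, E u v).

Definition locally_finite : Prop :=
  forall v, exists l : list V, NoDup l /\ forall u, E v u <-> In u l.

Definition leafless : Prop := forall v, exists u, E v u.

Definition countably_infinite_type : Prop :=
  exists f : nat -> V, (forall m n, f m = f n -> m = n) /\ (forall v, exists n, f n = v).

(* card (Chi v), well defined for locally finite trees *)
Definition card_chi (v : V) : nat :=
  epsilon (inhabits 0%nat)
    (fun k => exists l, NoDup l /\ (forall u, E v u <-> In u l) /\ length l = k).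

Inductive gen (root : V) : nat -> V -> Prop :=
  | gen0 : gen root 0 root
  | genS : forall n v u, gen root n v -> E v u -> gen root (S n) u.

Definition depth (root : V) (v : V) : nat :=
  epsilon (inhabits 0%nat) (fun n => gen root n v).

(* the parent of u (meaningful for u <> root) *)
Definition parent (root : V) (u : V) : V :=
  epsilon (inhabits root) (fun v => E v u).

Definition dirichlet_weight (root : V) (q : R) (u : V) : R :=
  let v := parent root u in
  / sqrt (INR (card_chi v)) * sqrt ((INR (depth root v) + q) / (INR (depth root v) + 1)).

(* The weighted shift acting coordinatewise:
   (S f)(u) = lambda_u f(parent u) for u <> root, (S f)(root) = 0,
   which is S e_v = sum_{u in Chi v} lambda_u e_u extended to l^2(V). *)
Definition dirichlet_shift (root : V) (q : R) (f : V -> C) : V -> C :=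
  fun u => if excluded_middle_informative (exists v, E v u)
           then Cscale (dirichlet_weight root q u) (f (parent root u))
           else C0.

Definition branching_sum (root : V) (n : nat) : nat :=
  epsilon (inhabits 0%nat)
    (fun s => exists l, NoDup l /\
       (forall v, In v l <-> (gen root n v /\ (2 <= card_chi v)%nat)) /\
       s = list_sum (map (fun v => (card_chi v - 1)%nat) l)).
End Trees.

Definition sumsq {V : Type} (f : V -> C) (l : list V) : R :=
  fold_right (fun v acc => Cnorm2 (f v) + acc) 0 l.

Definition in_l2 {V : Type} (f : V -> C) : Prop :=
  exists M, forall l : list V, NoDup l -> sumsq f l <= M.

Definition sqnorm_is {V : Type} (f : V -> C) (s : R) : Prop :=
  is_lub (fun x => exists l : list V, NoDup l /\ x = sumsq f l) s.

Definition unitarily_equivalent {V1 V2 : Type}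
  (S1 : (V1 -> C) -> (V1 -> C)) (S2 : (V2 -> C) -> (V2 -> C)) : Prop :=
  exists U : (V1 -> C) -> (V2 -> C),
    (forall f, in_l2 f -> in_l2 (U f)) /\
    (forall (a : C) f g, in_l2 f -> in_l2 g ->
        forall u, U (fun v => Cadd (Cmul a (f v)) (g v)) u = Cadd (Cmul a (U f u)) (U g u)) /\
    (forall f s, in_l2 f -> sqnorm_is f s -> sqnorm_is (U f) s) /\
    (forall g, in_l2 g -> exists f, in_l2 f /\ forall u, U f u = g u) /\
    (forall f, in_l2 f -> forall u, U (S1 f) u = S2 (U f) u).

(* A unitary intertwining the two shifts must map each depth-n basis vector
   e_v of the first tree into the span of the depth-n basis vectors of the
   second: e_v is an eigenvector of S*S for the eigenvalue c_n = (n+q)/(n+1),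
   these eigenvalues are pairwise distinct because q > 1, and U S*S U* is
   the S*S of the second tree.  Hence the generations have the same sizes,
   and #G_(n+1) = #G_n + sum over G_n of (card Chi v - 1).
   Conversely, with equal generation sizes, both l^2(G_n) carry orthonormal
   bases b^n_0, ..., b^n_(m_n - 1) such that S b^n_i = sqrt c_n b^(n+1)_i: the
   first m_n vectors at depth n+1 are the b^n_i spread evenly over the
   children, the remaining ones are Helmert vectors summing to zero on each
   family of siblings.  Sending the i-th basis vector of one tree to the i-th
   of the other defines the required unitary. *)

From Stdlib Require Import Reals List Relations ClassicalEpsilon Lra Lia Psatz
  FunctionalExtensionality Permutation.
Import ListNotations.
Open Scope R_scope.

Definition deq {A} (x y : A) : {x = y} + {x <> y} := excluded_middle_informative (x = y).

Definition lsum {A} (f : A -> R) (l : list A) : R := fold_right (fun x acc => f x + acc) 0 l.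

Lemma lsum_cons {A} (f : A -> R) a l : lsum f (a :: l) = f a + lsum f l.
Proof. reflexivity. Qed.

Lemma lsum_app {A} (f : A -> R) l1 l2 : lsum f (l1 ++ l2) = lsum f l1 + lsum f l2.
Proof. induction l1 as [|a l1 IH]; simpl; [lra|]. unfold lsum in *; rewrite IH; lra. Qed.

Lemma lsum_ext {A} (f g : A -> R) l : (forall x, In x l -> f x = g x) -> lsum f l = lsum g l.
Proof.
  induction l as [|a l IH]; intros H; simpl; auto.
  rewrite (H a) by (left; auto). rewrite IH; auto. intros; apply H; right; auto.
Qed.

Lemma lsum_plus {A} (f g : A -> R) l : lsum (fun x => f x + g x) l = lsum f l + lsum g l.
Proof. induction l; simpl; [lra|]. rewrite IHl. lra. Qed.

Lemma lsum_minus {A} (f g : A -> R) l : lsum (fun x => f x - g x) l = lsum f l - lsum g l.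
Proof. induction l; simpl; [lra|]. rewrite IHl. lra. Qed.

Lemma lsum_scal {A} c (f : A -> R) l : lsum (fun x => c * f x) l = c * lsum f l.
Proof. induction l; simpl; [lra|]. rewrite IHl. lra. Qed.

Lemma lsum_scal_r {A} c (f : A -> R) l : lsum (fun x => f x * c) l = lsum f l * c.
Proof. induction l; simpl; [lra|]. rewrite IHl. lra. Qed.

Lemma lsum_zero {A} (l : list A) : lsum (fun _ => 0) l = 0.
Proof. induction l; simpl; lra. Qed.

Lemma lsum_eq0 {A} (f : A -> R) l : (forall x, In x l -> f x = 0) -> lsum f l = 0.
Proof. intros H. rewrite (lsum_ext f (fun _ => 0)) by auto. apply lsum_zero. Qed.

Lemma lsum_le {A} (f g : A -> R) l : (forall x, In x l -> f x <= g x) -> lsum f l <= lsum g l.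
Proof.
  induction l as [|a l IH]; intros H; simpl; [lra|].
  assert (f a <= g a) by (apply H; left; auto).
  assert (lsum f l <= lsum g l) by (apply IH; intros; apply H; right; auto). lra.
Qed.

Lemma lsum_nonneg {A} (f : A -> R) l : (forall x, In x l -> 0 <= f x) -> 0 <= lsum f l.
Proof. intros H. rewrite <- (lsum_zero l). apply lsum_le; auto. Qed.

Lemma lsum_nonneg_eq0 {A} (f : A -> R) l : (forall x, In x l -> 0 <= f x) -> lsum f l = 0 ->
  forall x, In x l -> f x = 0.
Proof.
  induction l as [|a l IH]; intros H0 Hs x Hx; [destruct Hx|]. rewrite lsum_cons in Hs.
  assert (0 <= f a) by (apply H0; left; auto).
  assert (0 <= lsum f l) by (apply lsum_nonneg; intros; apply H0; right; auto).
  destruct Hx as [<-|Hx]; [lra|]. apply IH; auto. intros; apply H0; right; auto. lra.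
Qed.

Lemma lsum_const {A} c (l : list A) : lsum (fun _ => c) l = INR (length l) * c.
Proof. induction l; simpl length; [simpl; lra|]. rewrite lsum_cons, IHl, S_INR. lra. Qed.

Lemma lsum_swap {A B} (f : A -> B -> R) l m :
  lsum (fun x => lsum (f x) m) l = lsum (fun y => lsum (fun x => f x y) l) m.
Proof.
  induction l; simpl; [rewrite lsum_zero; reflexivity|]. rewrite IHl, <- lsum_plus. reflexivity.
Qed.

Lemma lsum_flat_map {A B} (f : B -> R) (g : A -> list B) l :
  lsum f (flat_map g l) = lsum (fun x => lsum f (g x)) l.
Proof. induction l; simpl; auto. rewrite lsum_app, IHl. reflexivity. Qed.

Lemma lsum_map {A B} (f : B -> R) (g : A -> B) l : lsum f (map g l) = lsum (fun x => f (g x)) l.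
Proof. induction l; simpl; auto. rewrite IHl; reflexivity. Qed.

Lemma lsum_incl {A} (f : A -> R) l L :
  (forall x, 0 <= f x) -> NoDup l -> incl l L -> lsum f l <= lsum f L.
Proof.
  intros Hf Hl. revert L. induction Hl as [|a l Ha Hl IH]; intros L Hi.
  - apply lsum_nonneg; auto.
  - assert (HaL : In a L) by (apply Hi; left; auto).
    destruct (in_split _ _ HaL) as [L1 [L2 ->]].
    assert (lsum f l <= lsum f (L1 ++ L2)).
    { apply IH. intros x Hx. assert (Hx' : In x (L1 ++ a :: L2)) by (apply Hi; right; auto).
      apply in_app_or in Hx'. apply in_or_app.
      destruct Hx' as [?|[?|?]]; auto. subst; contradiction. }
    rewrite lsum_app in *. rewrite !lsum_cons. lra.
Qed.

Lemma lsum_delta {A} (h : A -> R) (l : list A) a :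
  NoDup l -> In a l -> lsum (fun x => if deq a x then h x else 0) l = h a.
Proof.
  intros Hl. induction Hl as [|b l Hb Hl IH]; intros Ha; [destruct Ha|].
  rewrite lsum_cons. destruct Ha as [->|Ha].
  - destruct (deq a a); [|congruence].
    rewrite lsum_eq0; [lra|]. intros x Hx. destruct (deq a x); auto. subst; contradiction.
  - destruct (deq a b); [subst; contradiction|]. rewrite IH; auto; lra.
Qed.

Lemma NoDup_flat_map {A B} (f : A -> list B) (l : list A) :
  NoDup l -> (forall x, In x l -> NoDup (f x)) ->
  (forall x y z, In x l -> In y l -> In z (f x) -> In z (f y) -> x = y) ->
  NoDup (flat_map f l).
Proof.
  induction 1 as [|a l Ha Hl IH]; intros Hf Hd; simpl; [constructor|].
  apply NoDup_app.
  - apply Hf; left; auto.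
  - apply IH. intros; apply Hf; right; auto. intros; eapply Hd; eauto; right; auto.
  - intros z Hz Hz'. apply in_flat_map in Hz'. destruct Hz' as [y [Hy Hzy]].
    assert (a = y) by (eapply Hd; eauto; [left; auto|right; auto]). subst. contradiction.
Qed.

Lemma Ceq (z w : C) : Cre z = Cre w -> Cim z = Cim w -> z = w.
Proof. destruct z, w; simpl; intros; subst; auto. Qed.

Definition Cconj (z : C) : C := mkC (Cre z) (- Cim z).
Definition C1 : C := mkC 1 0.

Lemma Cnorm2_nonneg z : 0 <= Cnorm2 z.
Proof. unfold Cnorm2. nra. Qed.

Lemma Cnorm2_mul a z : Cnorm2 (Cmul a z) = Cnorm2 a * Cnorm2 z.
Proof. unfold Cnorm2, Cmul; simpl. ring. Qed.

Lemma Cnorm2_scale r z : Cnorm2 (Cscale r z) = r * r * Cnorm2 z.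
Proof. unfold Cnorm2, Cscale; simpl. ring. Qed.

Lemma Cnorm2_conj z : Cnorm2 (Cconj z) = Cnorm2 z.
Proof. unfold Cnorm2, Cconj; simpl. ring. Qed.

Lemma Cscale_cancel a b z : a <> b -> Cscale a z = Cscale b z -> z = C0.
Proof.
  intros Hab Hz. apply (f_equal Cre) in Hz as Hre. apply (f_equal Cim) in Hz as Him.
  unfold Cscale in *; simpl in *.
  assert (Hd : a - b <> 0) by lra.
  apply Ceq; simpl; apply (Rmult_eq_reg_l (a - b)); auto; lra.
Qed.

Lemma sumsq_lsum {V} (f : V -> C) l : sumsq f l = lsum (fun v => Cnorm2 (f v)) l.
Proof. reflexivity. Qed.

Lemma sumsq_nonneg {V} (f : V -> C) l : 0 <= sumsq f l.
Proof. apply lsum_nonneg. intros; apply Cnorm2_nonneg. Qed.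

Lemma sumsq_incl {V} (f : V -> C) l L : NoDup l -> incl l L -> sumsq f l <= sumsq f L.
Proof. intros. apply lsum_incl; auto. intros; apply Cnorm2_nonneg. Qed.

Lemma sumsq_app {V} (f : V -> C) l1 l2 : sumsq f (l1 ++ l2) = sumsq f l1 + sumsq f l2.
Proof. apply lsum_app. Qed.

Lemma sumsq_ext {V} (f g : V -> C) l : (forall x, In x l -> f x = g x) -> sumsq f l = sumsq g l.
Proof. intros H. apply lsum_ext. intros x Hx; rewrite H; auto. Qed.

Lemma sumsq_zero {V} (l : list V) : sumsq (fun _ => C0) l = 0.
Proof. apply lsum_eq0. intros. unfold Cnorm2, C0; simpl. ring. Qed.

Lemma sumsq_mul {V} (a : C) (f : V -> C) l :
  Cnorm2 a = 1 -> sumsq (fun v => Cmul a (f v)) l = sumsq f l.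
Proof. intros Ha. apply lsum_ext. intros. rewrite Cnorm2_mul, Ha. lra. Qed.

Definition sqnorm {V} (f : V -> C) : R := epsilon (inhabits 0) (fun s => sqnorm_is f s).

Lemma sqnorm_is_unique {V} (f : V -> C) s t : sqnorm_is f s -> sqnorm_is f t -> s = t.
Proof. apply is_lub_u. Qed.

Lemma sqnorm_is_sqnorm {V} (f : V -> C) : in_l2 f -> sqnorm_is f (sqnorm f).
Proof.
  intros [M HM]. unfold sqnorm. apply epsilon_spec.
  destruct (completeness (fun x => exists l : list V, NoDup l /\ x = sumsq f l)) as [m Hm].
  - exists M. intros x [l [Hl ->]]. auto.
  - exists 0, []. split; [constructor|reflexivity].
  - exists m. exact Hm.
Qed.

Lemma in_l2_sqnorm_is {V} (f : V -> C) s : sqnorm_is f s -> in_l2 f.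
Proof. intros H. exists s. intros l Hl. apply H. exists l; auto. Qed.

Lemma sqnorm_eq {V} (f : V -> C) s : sqnorm_is f s -> sqnorm f = s.
Proof.
  intros H. apply (sqnorm_is_unique f); auto.
  apply sqnorm_is_sqnorm, (in_l2_sqnorm_is f s H).
Qed.

Definition notinb {V} (L : list V) (x : V) : bool :=
  if excluded_middle_informative (In x L) then false else true.

Lemma notinb_spec {V} (L : list V) x : notinb L x = true <-> ~ In x L.
Proof.
  unfold notinb. destruct (excluded_middle_informative (In x L)); split; intros;
    auto; try discriminate; contradiction.
Qed.

Lemma NoDup_app_notin {V} (L l : list V) : NoDup L -> NoDup l ->
  NoDup (L ++ filter (notinb L) l) /\ incl l (L ++ filter (notinb L) l).
Proof.
  intros HL Hl. split.
  - apply NoDup_app; auto. apply NoDup_filter; auto.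
    intros a Ha Hf. apply filter_In in Hf. destruct Hf as [_ Hf]. apply notinb_spec in Hf. auto.
  - intros x Hx. apply in_or_app. destruct (excluded_middle_informative (In x L)); auto.
    right. apply filter_In. split; auto. apply notinb_spec; auto.
Qed.

Lemma sqnorm_is_perturb {V} (g h : V -> C) L s : NoDup L ->
  (forall u, ~ In u L -> h u = g u) ->
  sqnorm_is g s -> sqnorm_is h (s + sumsq h L - sumsq g L).
Proof.
  intros HL Hgh [Hub Hlub].
  assert (HF : forall l, sumsq h (filter (notinb L) l) = sumsq g (filter (notinb L) l)).
  { intros l. apply sumsq_ext. intros x Hx. apply filter_In in Hx.
    apply Hgh, notinb_spec. tauto. }
  split.
  - intros x [l [Hl ->]]. destruct (NoDup_app_notin L l HL Hl) as [Hn Hi].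
    pose proof (sumsq_incl h _ _ Hl Hi) as Hle. rewrite sumsq_app, HF in Hle.
    assert (Hs : sumsq g (L ++ filter (notinb L) l) <= s) by (apply Hub; eexists; eauto).
    rewrite sumsq_app in Hs. lra.
  - intros b Hb.
    assert (s <= b - sumsq h L + sumsq g L); [|lra].
    apply Hlub. intros x [l [Hl ->]]. destruct (NoDup_app_notin L l HL Hl) as [Hn Hi].
    pose proof (sumsq_incl g _ _ Hl Hi) as Hle. rewrite sumsq_app, <- HF in Hle.
    assert (Hs : sumsq h (L ++ filter (notinb L) l) <= b) by (apply Hb; eexists; eauto).
    rewrite sumsq_app in Hs. lra.
Qed.

Lemma sqnorm_is_zero {V} : sqnorm_is (fun _ : V => C0) 0.
Proof.
  split.
  - intros x [l [_ ->]]. rewrite sumsq_zero. lra.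
  - intros b Hb. apply Hb. exists []. split; [constructor|reflexivity].
Qed.

Lemma sqnorm_is_finite_support {V} (g : V -> C) L : NoDup L ->
  (forall u, ~ In u L -> g u = C0) -> sqnorm_is g (sumsq g L).
Proof.
  intros HL Hg. pose proof (sqnorm_is_perturb _ g L 0 HL Hg sqnorm_is_zero) as H.
  rewrite sumsq_zero in H. replace (0 + sumsq g L - 0) with (sumsq g L) in H by ring. exact H.
Qed.

Lemma sqnorm_is_mul {V} (y : V -> C) a s : Cnorm2 a = 1 -> sqnorm_is y s ->
  sqnorm_is (fun v => Cmul a (y v)) s.
Proof.
  intros Ha [Hub Hlub]. split.
  - intros x [l [Hl ->]]. rewrite sumsq_mul by auto. apply Hub. exists l; auto.
  - intros b Hb. apply Hlub. intros x [l [Hl ->]]. rewrite <- (sumsq_mul a) by auto.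
    apply Hb. exists l; auto.
Qed.

Definition lin_comb {V} (a : C) (y x : V -> C) : V -> C := fun v => Cadd (Cmul a (y v)) (x v).

Lemma in_l2_lin_comb {V} a (y x : V -> C) : in_l2 y -> in_l2 x -> in_l2 (lin_comb a y x).
Proof.
  intros [My HMy] [Mx HMx]. exists (2 * Cnorm2 a * My + 2 * Mx).
  intros l Hl. specialize (HMy l Hl). specialize (HMx l Hl).
  assert (sumsq (lin_comb a y x) l <= 2 * Cnorm2 a * sumsq y l + 2 * sumsq x l).
  { rewrite !sumsq_lsum, <- lsum_scal, <- lsum_scal, <- lsum_plus.
    apply lsum_le. intros v _. unfold lin_comb.
    replace (2 * Cnorm2 a * Cnorm2 (y v)) with (2 * Cnorm2 (Cmul a (y v)))
      by (rewrite Cnorm2_mul; ring).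
    destruct (Cmul a (y v)) as [p p'], (x v) as [r r']. unfold Cnorm2, Cadd; simpl.
    pose proof (pow2_ge_0 (p - r)). pose proof (pow2_ge_0 (p' - r')). nra. }
  pose proof (Cnorm2_nonneg a). nra.
Qed.

(* The inner product <x, y>, linear in x, by polarization:
   Re <x,y> = (|x + y|^2 - |x - y|^2) / 4,  Im <x,y> = (|x + i y|^2 - |x - i y|^2) / 4. *)
Definition inner {V} (x y : V -> C) : C :=
  mkC ((sqnorm (lin_comb C1 y x) - sqnorm (lin_comb (mkC (-1) 0) y x)) / 4)
      ((sqnorm (lin_comb (mkC 0 1) y x) - sqnorm (lin_comb (mkC 0 (-1)) y x)) / 4).

Lemma inner_finite_support {V} (x y : V -> C) L : in_l2 x -> in_l2 y -> NoDup L ->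
  ((forall u, ~ In u L -> y u = C0) \/ (forall u, ~ In u L -> x u = C0)) ->
  inner x y = mkC (lsum (fun u => Cre (Cmul (x u) (Cconj (y u)))) L)
                  (lsum (fun u => Cim (Cmul (x u) (Cconj (y u)))) L).
Proof.
  intros Hx Hy HL Hs.
  assert (HK : exists K, forall a, Cnorm2 a = 1 ->
                 sqnorm (lin_comb a y x) = K + sumsq (lin_comb a y x) L).
  { destruct Hs as [Hs|Hs].
    - exists (sqnorm x - sumsq x L). intros a Ha. apply sqnorm_eq.
      replace (sqnorm x - sumsq x L + sumsq (lin_comb a y x) L)
        with (sqnorm x + sumsq (lin_comb a y x) L - sumsq x L) by ring.
      apply sqnorm_is_perturb; [exact HL| |apply sqnorm_is_sqnorm; exact Hx].
      intros u Hu. unfold lin_comb. rewrite Hs by auto.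
      apply Ceq; unfold Cmul, Cadd, C0; simpl; ring.
    - exists (sqnorm y - sumsq y L). intros a Ha. apply sqnorm_eq.
      replace (sqnorm y - sumsq y L + sumsq (lin_comb a y x) L)
        with (sqnorm y + sumsq (lin_comb a y x) L - sumsq (fun v => Cmul a (y v)) L)
        by (rewrite sumsq_mul by auto; ring).
      apply sqnorm_is_perturb; [exact HL| |apply sqnorm_is_mul, sqnorm_is_sqnorm; auto].
      intros u Hu. unfold lin_comb. rewrite Hs by auto.
      apply Ceq; unfold Cmul, Cadd, C0; simpl; ring. }
  destruct HK as [K HK].
  unfold inner. rewrite !HK by (unfold Cnorm2, C1; simpl; ring).
  apply Ceq; simpl;
    match goal with |- (?K + ?A - (?K + ?B)) / 4 = _ =>
      replace ((K + A - (K + B)) / 4) with ((A - B) / 4) by field end;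
    rewrite !sumsq_lsum, <- lsum_minus; unfold Rdiv; rewrite <- lsum_scal_r;
    apply lsum_ext; intros u _; unfold lin_comb, Cnorm2, Cadd, Cmul, Cconj, C1; simpl; field.
Qed.

Definition basis_vec {V} (w : V) : V -> C := fun u => if deq u w then C1 else C0.

Lemma basis_vec_out {V} (w u : V) : ~ In u [w] -> basis_vec w u = C0.
Proof. intros H. unfold basis_vec. destruct (deq u w); auto. subst. exfalso; apply H; now left. Qed.

Lemma NoDup_single {V} (w : V) : NoDup [w].
Proof. apply NoDup_cons; [intros []|constructor]. Qed.

Lemma sqnorm_is_basis_vec {V} (w : V) : sqnorm_is (basis_vec w) 1.
Proof.
  pose proof (sqnorm_is_finite_support (basis_vec w) [w] (NoDup_single w) (basis_vec_out w)) as H.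
  replace (sumsq (basis_vec w) [w]) with 1 in H; auto.
  simpl. unfold basis_vec. destruct (deq w w); [|congruence]. unfold Cnorm2, C1; simpl. ring.
Qed.

Lemma in_l2_basis_vec {V} (w : V) : in_l2 (basis_vec w).
Proof. eapply in_l2_sqnorm_is. apply sqnorm_is_basis_vec. Qed.

Lemma inner_basis_vec_r {V} (x : V -> C) w : in_l2 x -> inner x (basis_vec w) = x w.
Proof.
  intros Hx. rewrite (inner_finite_support x (basis_vec w) [w]);
    auto using in_l2_basis_vec, NoDup_single.
  - simpl. unfold basis_vec. destruct (deq w w); [|congruence].
    apply Ceq; unfold Cmul, Cconj, C1; simpl; ring.
  - left; apply basis_vec_out.
Qed.

Lemma inner_basis_vec_l {V} (x : V -> C) w : in_l2 x -> inner (basis_vec w) x = Cconj (x w).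
Proof.
  intros Hx. rewrite (inner_finite_support (basis_vec w) x [w]);
    auto using in_l2_basis_vec, NoDup_single.
  - simpl. unfold basis_vec. destruct (deq w w); [|congruence].
    apply Ceq; unfold Cmul, Cconj, C1; simpl; ring.
  - right; apply basis_vec_out.
Qed.

Section Isometry.
Context {V1 V2 : Type} (U : (V1 -> C) -> (V2 -> C)).
Hypothesis U_l2 : forall f, in_l2 f -> in_l2 (U f).
Hypothesis U_linear : forall (a : C) f g, in_l2 f -> in_l2 g ->
  forall u, U (fun v => Cadd (Cmul a (f v)) (g v)) u = Cadd (Cmul a (U f u)) (U g u).
Hypothesis U_isometric : forall f s, in_l2 f -> sqnorm_is f s -> sqnorm_is (U f) s.

Lemma sqnorm_lin_comb_isometry a (x y : V1 -> C) : in_l2 x -> in_l2 y ->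
  sqnorm (lin_comb a (U y) (U x)) = sqnorm (lin_comb a y x).
Proof.
  intros Hx Hy. assert (E : lin_comb a (U y) (U x) = U (lin_comb a y x)).
  { apply functional_extensionality. intros u. unfold lin_comb. rewrite U_linear; auto. }
  rewrite E. apply sqnorm_eq, U_isometric; [|apply sqnorm_is_sqnorm]; apply in_l2_lin_comb; auto.
Qed.

Lemma inner_isometry (x y : V1 -> C) : in_l2 x -> in_l2 y -> inner (U x) (U y) = inner x y.
Proof. intros. unfold inner. rewrite !sqnorm_lin_comb_isometry; auto. Qed.

End Isometry.

(** * Rooted directed trees and the Dirichlet shift *)

Section Tree.
Context {V : Type} (E : V -> V -> Prop) (root : V).
Hypothesis T : rooted_directed_tree E root.
Hypothesis lf : locally_finite E.
Hypothesis ll : leafless E.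

Lemma no_parent_root u : ~ E u root.
Proof. destruct T as [_ [_ [_ [H _]]]]. apply H. Qed.

Lemma parent_unique v v' u : E v u -> E v' u -> v = v'.
Proof.
  intros H1 H2. destruct T as [_ [_ [_ [Hr Hu]]]].
  assert (Hne : u <> root) by (intros ->; eapply Hr; eauto).
  destruct (Hu u Hne) as [p [_ Hp]]. rewrite <- (Hp v H1). apply Hp; auto.
Qed.

Definition children (v : V) : list V :=
  epsilon (inhabits []) (fun l => NoDup l /\ forall u, E v u <-> In u l).

Lemma children_spec v : NoDup (children v) /\ forall u, E v u <-> In u (children v).
Proof. unfold children. apply epsilon_spec. apply lf. Qed.

Lemma children_nodup v : NoDup (children v). Proof. apply children_spec. Qed.
Lemma in_children v u : E v u <-> In u (children v). Proof. apply children_spec. Qed.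

Lemma card_chi_children v : card_chi E v = length (children v).
Proof.
  unfold card_chi.
  assert (H : exists k, exists l, NoDup l /\ (forall u, E v u <-> In u l) /\ length l = k).
  { exists (length (children v)), (children v).
    split; [apply children_nodup|split; [apply in_children|auto]]. }
  destruct (epsilon_spec (inhabits 0%nat) _ H) as [l [Hl [Hm <-]]].
  apply Nat.le_antisymm; apply NoDup_incl_length; try apply children_nodup; auto;
    intros x Hx; [apply in_children, Hm | apply Hm, in_children]; auto.
Qed.

Lemma card_chi_pos v : (1 <= card_chi E v)%nat.
Proof.
  rewrite card_chi_children. destruct (ll v) as [u Hu]. apply in_children in Hu.
  destruct (children v); [destruct Hu|simpl; lia].
Qed.

Lemma parent_spec v u : E v u -> parent E root u = v.
Proof. intros H. unfold parent. apply (parent_unique _ _ u); auto. apply epsilon_spec. eauto. Qed.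

Lemma parent_children v u : In u (children v) -> parent E root u = v.
Proof. intros H. apply parent_spec, in_children; auto. Qed.

Lemma children_disjoint v v' u : In u (children v) -> In u (children v') -> v = v'.
Proof. intros H1 H2. rewrite <- (parent_children v u H1). apply parent_children; auto. Qed.

Lemma gen0_inv u : gen E root 0 u -> u = root.
Proof. intros H. inversion H. auto. Qed.

Lemma genS_inv n u : gen E root (S n) u -> exists v, gen E root n v /\ E v u.
Proof. intros H. inversion H. eauto. Qed.

Fixpoint generation (n : nat) : list V :=
  match n with O => [root] | S n => flat_map children (generation n) end.

Lemma in_generation n u : In u (generation n) <-> gen E root n u.
Proof.
  revert u; induction n as [|n IH]; intros u; simpl.
  - split; [intros [<-|[]]; constructor|intros H; inversion H; auto].
  - rewrite in_flat_map. split.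
    + intros [v [Hv Hu]]. econstructor; [apply IH; eauto|apply in_children; auto].
    + intros H; apply genS_inv in H. destruct H as [v [Hv Hvu]].
      exists v. split; [apply IH|apply in_children]; auto.
Qed.

Lemma generation_nodup n : NoDup (generation n).
Proof.
  induction n; simpl; [apply NoDup_cons; [intros []|constructor]|].
  apply NoDup_flat_map; auto using children_nodup.
  intros x y z _ _ Hx Hy. apply in_children in Hx, Hy. eapply parent_unique; eauto.
Qed.

Lemma children_generation n v u : In v (generation n) -> In u (children v) ->
  In u (generation (S n)).
Proof. intros. simpl. apply in_flat_map. eauto. Qed.

Lemma generation_S_parent n u : In u (generation (S n)) ->
  In (parent E root u) (generation n) /\ In u (children (parent E root u)).
Proof.
  simpl. rewrite in_flat_map. intros [v [Hv Hu]]. rewrite (parent_children v u Hu). auto.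
Qed.

Lemma gen_unique n m u : gen E root n u -> gen E root m u -> n = m.
Proof.
  revert m u; induction n as [|n IH]; intros m u H1 H2.
  - apply gen0_inv in H1. rewrite H1 in H2. destruct m; auto.
    apply genS_inv in H2. destruct H2 as [v [_ Hv]]. exfalso; eapply no_parent_root; eauto.
  - apply genS_inv in H1. destruct H1 as [v [Hv Hvu]]. destruct m.
    + apply gen0_inv in H2. rewrite H2 in Hvu. exfalso; eapply no_parent_root; eauto.
    + apply genS_inv in H2. destruct H2 as [w [Hw Hwu]].
      f_equal. apply (IH _ v); auto. rewrite (parent_unique v w u); auto.
Qed.

Lemma gen_exists u : exists n, gen E root n u.
Proof.
  destruct T as [_ [_ [Hc _]]].
  assert (H : forall x y, clos_refl_sym_trans V E x y ->
                ((exists n, gen E root n x) <-> (exists n, gen E root n y))).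
  { intros x y H. induction H as [x y Hxy| | |]; try tauto.
    split; intros [n Hn]; [exists (S n); econstructor; eauto|].
    destruct n.
    - apply gen0_inv in Hn. rewrite Hn in Hxy. exfalso; eapply no_parent_root; eauto.
    - apply genS_inv in Hn. destruct Hn as [v [Hv Hvy]].
      exists n. rewrite (parent_unique x v y); auto. }
  apply (H root u). apply Hc. exists 0%nat; constructor.
Qed.

Lemma depth_gen n u : gen E root n u -> depth E root u = n.
Proof.
  intros H. unfold depth. apply (gen_unique _ _ u); auto.
  apply epsilon_spec. eauto.
Qed.

Lemma depth_generation n u : In u (generation n) -> depth E root u = n.
Proof. intros H; apply depth_gen, in_generation; auto. Qed.

Lemma in_generation_depth u : In u (generation (depth E root u)).
Proof.
  destruct (gen_exists u) as [n Hn]. rewrite (depth_gen n u Hn). apply in_generation; auto.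
Qed.

Definition generations_upto (N : nat) : list V := flat_map generation (seq 0 (S N)).

Lemma in_generations_upto N u : In u (generations_upto N) <-> (depth E root u <= N)%nat.
Proof.
  unfold generations_upto. rewrite in_flat_map. split.
  - intros [n [Hn Hu]]. apply in_seq in Hn. rewrite (depth_generation n u Hu). lia.
  - intros H. exists (depth E root u). split; [apply in_seq; lia|apply in_generation_depth].
Qed.

Lemma generations_upto_nodup N : NoDup (generations_upto N).
Proof.
  apply NoDup_flat_map; auto using seq_NoDup, generation_nodup.
  intros x y z _ _ Hx Hy. rewrite <- (depth_generation x z Hx). apply depth_generation; auto.
Qed.

Lemma generations_upto_S N : generations_upto (S N) = generations_upto N ++ generation (S N).
Proof.
  unfold generations_upto. rewrite seq_S, flat_map_app. simpl. rewrite app_nil_r. reflexivity.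
Qed.

Lemma incl_generations_upto (l : list V) : exists N, incl l (generations_upto N).
Proof.
  induction l as [|a l [N HN]]; [exists 0%nat; intros x []|].
  exists (Nat.max N (depth E root a)). intros x [<-|Hx]; apply in_generations_upto; [lia|].
  apply HN, in_generations_upto in Hx. lia.
Qed.

Lemma sqnorm_is_generations (g : V -> C) s :
  sqnorm_is g s <-> is_lub (fun x => exists N, x = sumsq g (generations_upto N)) s.
Proof.
  assert (Hbound : forall l, NoDup l -> exists N, sumsq g l <= sumsq g (generations_upto N)).
  { intros l Hl. destruct (incl_generations_upto l) as [N HN]. exists N. apply sumsq_incl; auto. }
  split; intros [Hub Hlub]; split.
  - intros x [N ->]. apply Hub. eexists; split; [apply generations_upto_nodup|reflexivity].
  - intros b Hb. apply Hlub. intros x [l [Hl ->]]. destruct (Hbound l Hl) as [N HN].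
    eapply Rle_trans; [apply HN|]. apply Hb; eauto.
  - intros x [l [Hl ->]]. destruct (Hbound l Hl) as [N HN].
    eapply Rle_trans; [apply HN|]. apply Hub; eauto.
  - intros b Hb. apply Hlub. intros x [N ->]. apply Hb.
    eexists; split; [apply generations_upto_nodup|reflexivity].
Qed.

Lemma in_l2_generations (g : V -> C) :
  in_l2 g <-> exists M, forall N, sumsq g (generations_upto N) <= M.
Proof.
  split; intros [M HM]; exists M.
  - intros N. apply HM, generations_upto_nodup.
  - intros l Hl. destruct (incl_generations_upto l) as [N HN].
    eapply Rle_trans; [apply sumsq_incl; eauto|]. auto.
Qed.

Variable q : R.
Hypothesis hq : 1 <= q.

Definition dirichlet_factor (n : nat) : R := (INR n + q) / (INR n + 1).

Lemma dirichlet_factor_pos n : 0 < dirichlet_factor n.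
Proof. unfold dirichlet_factor. pose proof (pos_INR n). apply Rdiv_lt_0_compat; lra. Qed.

Lemma dirichlet_factor_le n : dirichlet_factor n <= q.
Proof.
  unfold dirichlet_factor. pose proof (pos_INR n).
  apply Rmult_le_reg_r with (INR n + 1); [lra|].
  unfold Rdiv. rewrite Rmult_assoc, Rinv_l by lra. nra.
Qed.

Definition child_weight (v : V) : R :=
  / sqrt (INR (card_chi E v)) * sqrt (dirichlet_factor (depth E root v)).

Lemma dirichlet_weight_children v u :
  In u (children v) -> dirichlet_weight E root q u = child_weight v.
Proof. intros H. unfold dirichlet_weight. rewrite (parent_children v u H). reflexivity. Qed.

Lemma sum_child_weight_sq v :
  lsum (fun _ => child_weight v * child_weight v) (children v) = dirichlet_factor (depth E root v).
Proof.
  rewrite lsum_const, <- card_chi_children. unfold child_weight.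
  assert (Hk : 0 < INR (card_chi E v)) by (apply lt_0_INR; pose proof (card_chi_pos v); lia).
  pose proof (dirichlet_factor_pos (depth E root v)).
  set (k := INR (card_chi E v)) in *. set (c := dirichlet_factor (depth E root v)) in *.
  assert (Hs : 0 < sqrt k) by (apply sqrt_lt_R0; auto).
  replace (k * (/ sqrt k * sqrt c * (/ sqrt k * sqrt c)))
    with (k / (sqrt k * sqrt k) * (sqrt c * sqrt c)) by (field; lra).
  rewrite !sqrt_sqrt by lra. field. lra.
Qed.

Notation Sh := (dirichlet_shift E root q).

Lemma shift_children f v u : In u (children v) -> Sh f u = Cscale (child_weight v) (f v).
Proof.
  intros H. unfold dirichlet_shift. destruct (excluded_middle_informative _) as [_|n].
  - rewrite (dirichlet_weight_children v u H), (parent_children v u H). reflexivity.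
  - exfalso. apply n. exists v. apply in_children; auto.
Qed.

Lemma shift_orphan f u : ~ (exists v, E v u) -> Sh f u = C0.
Proof. intros H. unfold dirichlet_shift. destruct (excluded_middle_informative _); tauto. Qed.

Lemma sumsq_shift_generation f n :
  sumsq (Sh f) (generation (S n)) = dirichlet_factor n * sumsq f (generation n).
Proof.
  simpl generation. rewrite !sumsq_lsum, lsum_flat_map, <- lsum_scal. apply lsum_ext.
  intros v Hv. rewrite (lsum_ext _ (fun _ => child_weight v * child_weight v * Cnorm2 (f v))).
  - rewrite lsum_scal_r, sum_child_weight_sq, (depth_generation n v Hv). reflexivity.
  - intros u Hu. rewrite (shift_children f v u Hu), Cnorm2_scale. reflexivity.
Qed.

Lemma sumsq_shift_upto f N :
  sumsq (Sh f) (generations_upto N) + q * sumsq f (generation N) <= q * sumsq f (generations_upto N).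
Proof.
  induction N.
  - unfold generations_upto. simpl. rewrite shift_orphan.
    + unfold Cnorm2, C0; simpl. lra.
    + intros [v Hv]. eapply no_parent_root; eauto.
  - rewrite !generations_upto_S, !sumsq_app, sumsq_shift_generation.
    pose proof (dirichlet_factor_le N). pose proof (sumsq_nonneg f (generation N)).
    pose proof (sumsq_nonneg f (generation (S N))). nra.
Qed.

Lemma in_l2_shift f : in_l2 f -> in_l2 (Sh f).
Proof.
  intros Hf. apply in_l2_generations in Hf as [M HM]. apply in_l2_generations.
  exists (q * M). intros N. pose proof (sumsq_shift_upto f N). pose proof (HM N).
  pose proof (sumsq_nonneg f (generation N)). nra.
Qed.

Lemma shift_basis_vec_out w u : ~ In u (children w) -> Sh (basis_vec w) u = C0.
Proof.
  intros H. destruct (excluded_middle_informative (exists v, E v u)) as [[v Hv]|Hn].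
  - apply in_children in Hv. rewrite (shift_children _ v u Hv). unfold basis_vec.
    destruct (deq v w); [subst; contradiction|]. apply Ceq; unfold Cscale, C0; simpl; ring.
  - apply shift_orphan; auto.
Qed.

Lemma shift_basis_vec_children w u : In u (children w) -> Sh (basis_vec w) u = mkC (child_weight w) 0.
Proof.
  intros H. rewrite (shift_children _ w u H). unfold basis_vec. destruct (deq w w); [|congruence].
  apply Ceq; unfold Cscale, C1; simpl; ring.
Qed.

(* e_w is an eigenvector of S*S for the eigenvalue c_(n_w). *)
Lemma inner_shift_basis_vec_r y w : in_l2 y ->
  inner (Sh y) (Sh (basis_vec w)) = Cscale (dirichlet_factor (depth E root w)) (y w).
Proof.
  intros Hy. rewrite (inner_finite_support _ _ (children w)); auto using in_l2_shift,
    in_l2_basis_vec, children_nodup.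
  - rewrite <- sum_child_weight_sq. unfold Cscale. rewrite <- !lsum_scal_r.
    apply Ceq; apply lsum_ext; intros u Hu;
      rewrite (shift_basis_vec_children w u Hu), (shift_children y w u Hu);
      unfold Cmul, Cscale, Cconj; simpl; ring.
  - left; apply shift_basis_vec_out.
Qed.

Lemma inner_shift_basis_vec_l y w : in_l2 y ->
  inner (Sh (basis_vec w)) (Sh y) = Cscale (dirichlet_factor (depth E root w)) (Cconj (y w)).
Proof.
  intros Hy. rewrite (inner_finite_support _ _ (children w)); auto using in_l2_shift,
    in_l2_basis_vec, children_nodup.
  - rewrite <- sum_child_weight_sq. unfold Cscale. rewrite <- !lsum_scal_r.
    apply Ceq; apply lsum_ext; intros u Hu;
      rewrite (shift_basis_vec_children w u Hu), (shift_children y w u Hu);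
      unfold Cmul, Cscale, Cconj; simpl; ring.
  - right; apply shift_basis_vec_out.
Qed.

End Tree.

(** * Unitary equivalence forces equal generation sizes *)

Lemma dirichlet_factor_inj q n m : 1 < q -> dirichlet_factor q n = dirichlet_factor q m -> n = m.
Proof.
  intros Hq H. unfold dirichlet_factor in H. pose proof (pos_INR n). pose proof (pos_INR m).
  apply INR_eq. apply Rmult_eq_reg_l with (q - 1); [|lra].
  apply (Rmult_eq_compat_r ((INR n + 1) * (INR m + 1))) in H.
  field_simplify in H; lra.
Qed.

Section Forward.
Context {V1 V2 : Type} (E1 : V1 -> V1 -> Prop) (root1 : V1) (E2 : V2 -> V2 -> Prop) (root2 : V2).
Hypothesis T1 : rooted_directed_tree E1 root1.
Hypothesis lf1 : locally_finite E1.
Hypothesis ll1 : leafless E1.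
Hypothesis T2 : rooted_directed_tree E2 root2.
Hypothesis lf2 : locally_finite E2.
Hypothesis ll2 : leafless E2.
Variable q : R.
Hypothesis hq : 1 < q.
Notation S1 := (dirichlet_shift E1 root1 q).
Notation S2 := (dirichlet_shift E2 root2 q).
Variable U : (V1 -> C) -> (V2 -> C).
Hypothesis U_l2 : forall f, in_l2 f -> in_l2 (U f).
Hypothesis U_linear : forall (a : C) f g, in_l2 f -> in_l2 g ->
  forall u, U (fun v => Cadd (Cmul a (f v)) (g v)) u = Cadd (Cmul a (U f u)) (U g u).
Hypothesis U_isometric : forall f s, in_l2 f -> sqnorm_is f s -> sqnorm_is (U f) s.
Hypothesis U_surjective : forall g, in_l2 g -> exists f, in_l2 f /\ forall u, U f u = g u.
Hypothesis U_intertwines : forall f, in_l2 f -> forall u, U (S1 f) u = S2 (U f) u.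

Let hq1 : 1 <= q. Proof. lra. Qed.

Let U_inner x y : in_l2 x -> in_l2 y -> inner (U x) (U y) = inner x y.
Proof. apply inner_isometry; auto. Qed.

Definition preimage (w : V2) : V1 -> C :=
  epsilon (inhabits (fun _ => C0)) (fun f => in_l2 f /\ forall u, U f u = basis_vec w u).

Lemma preimage_spec w : in_l2 (preimage w) /\ U (preimage w) = basis_vec w.
Proof.
  assert (H : in_l2 (preimage w) /\ forall u, U (preimage w) u = basis_vec w u).
  { unfold preimage. apply epsilon_spec, U_surjective, in_l2_basis_vec. }
  split; [apply H|apply functional_extensionality, H].
Qed.

Lemma preimage_coef v w : preimage w v = Cconj (U (basis_vec v) w).
Proof.
  destruct (preimage_spec w) as [Hz Ez].
  rewrite <- (inner_basis_vec_r (preimage w) v Hz), <- U_inner, Ez by auto using in_l2_basis_vec.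
  apply inner_basis_vec_l, U_l2, in_l2_basis_vec.
Qed.

Lemma U_basis_vec_depth v w : depth E2 root2 w <> depth E1 root1 v -> U (basis_vec v) w = C0.
Proof.
  intros Hvw. destruct (preimage_spec w) as [Hz Ez].
  assert (He : in_l2 (basis_vec v)) by apply in_l2_basis_vec.
  pose proof (in_l2_shift E1 root1 T1 lf1 ll1 q hq1) as S1_l2.
  assert (HS : forall f, in_l2 f -> S2 (U f) = U (S1 f)).
  { intros f Hf. apply functional_extensionality. intros; rewrite U_intertwines; auto. }
  apply (Cscale_cancel (dirichlet_factor q (depth E2 root2 w)) (dirichlet_factor q (depth E1 root1 v))).
  - intros H. apply Hvw, (dirichlet_factor_inj q); auto.
  - rewrite <- (inner_shift_basis_vec_r E2 root2 T2 lf2 ll2 q hq1); auto.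
    rewrite <- Ez, !HS, U_inner; auto.
    rewrite (inner_shift_basis_vec_l E1 root1 T1 lf1 ll1 q hq1); auto.
    rewrite preimage_coef. f_equal. apply Ceq; unfold Cconj; simpl; ring.
Qed.

Lemma sumsq_U_basis_vec n v : In v (generation E1 root1 n) ->
  sumsq (U (basis_vec v)) (generation E2 root2 n) = 1.
Proof.
  intros Hv. apply (sqnorm_is_unique (U (basis_vec v))).
  - apply sqnorm_is_finite_support; [apply generation_nodup; auto|].
    intros w Hw. apply U_basis_vec_depth. rewrite (depth_generation E1 root1 T1 lf1 n v Hv).
    intros Hd. apply Hw. rewrite <- Hd. apply in_generation_depth; auto.
  - apply U_isometric; [apply in_l2_basis_vec|apply sqnorm_is_basis_vec].
Qed.

Lemma sumsq_preimage n w : In w (generation E2 root2 n) ->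
  sumsq (preimage w) (generation E1 root1 n) = 1.
Proof.
  intros Hw. destruct (preimage_spec w) as [Hz Ez].
  apply (sqnorm_is_unique (preimage w)).
  - apply sqnorm_is_finite_support; [apply generation_nodup; auto|].
    intros v Hv. rewrite preimage_coef, U_basis_vec_depth.
    + apply Ceq; unfold Cconj, C0; simpl; ring.
    + rewrite (depth_generation E2 root2 T2 lf2 n w Hw).
      intros Hd. apply Hv. rewrite Hd. apply in_generation_depth; auto.
  - replace 1 with (sqnorm (preimage w)); [apply sqnorm_is_sqnorm; auto|].
    apply (sqnorm_is_unique (basis_vec w)); [|apply sqnorm_is_basis_vec].
    rewrite <- Ez. apply U_isometric, sqnorm_is_sqnorm; auto.
Qed.

(* Both sides count the total mass sum_(v, w) |<U e_v, e_w>|^2 at depth n. *)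
Lemma generation_length_eq n : length (generation E1 root1 n) = length (generation E2 root2 n).
Proof.
  apply INR_eq.
  rewrite <- (Rmult_1_r (INR (length (generation E1 root1 n)))),
          <- (Rmult_1_r (INR (length (generation E2 root2 n)))), <- !lsum_const.
  transitivity (lsum (fun v => sumsq (U (basis_vec v)) (generation E2 root2 n)) (generation E1 root1 n)).
  { apply lsum_ext. intros v Hv. symmetry. apply sumsq_U_basis_vec; auto. }
  transitivity (lsum (fun w => sumsq (preimage w) (generation E1 root1 n)) (generation E2 root2 n)).
  2:{ apply lsum_ext. intros w Hw. apply sumsq_preimage; auto. }
  rewrite (lsum_ext _ (fun v => lsum (fun w => Cnorm2 (U (basis_vec v) w)) (generation E2 root2 n)))
    by (intros; apply sumsq_lsum).
  rewrite (lsum_ext _ (fun w => lsum (fun v => Cnorm2 (preimage w v)) (generation E1 root1 n))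
                    (generation E2 root2 n))
    by (intros; apply sumsq_lsum).
  rewrite lsum_swap. apply lsum_ext. intros w _.
  apply lsum_ext. intros v _. rewrite preimage_coef, Cnorm2_conj. reflexivity.
Qed.

End Forward.

(** * Branching sums and generation sizes *)

Lemma list_sum_filter {A} (h : A -> nat) (p : A -> bool) l :
  (forall x, p x = false -> h x = 0%nat) -> list_sum (map h (filter p l)) = list_sum (map h l).
Proof.
  intros H. induction l as [|a l IH]; simpl; auto.
  destruct (p a) eqn:Ha; simpl; rewrite IH; auto. rewrite H; auto.
Qed.

Section Branching.
Context {V : Type} (E : V -> V -> Prop) (root : V).
Hypothesis T : rooted_directed_tree E root.
Hypothesis lf : locally_finite E.
Hypothesis ll : leafless E.

Lemma length_flat_map_children (l : list V) :
  (list_sum (map (fun v => (card_chi E v - 1)%nat) l) + length l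
   = length (flat_map (children E) l))%nat.
Proof.
  induction l as [|a l IH]; simpl; auto.
  rewrite length_app, <- card_chi_children by auto. pose proof (card_chi_pos E lf ll a). lia.
Qed.

Lemma branching_sum_generation n :
  (branching_sum E root n + length (generation E root n) = length (generation E root (S n)))%nat.
Proof.
  unfold branching_sum. set (h := fun v => (card_chi E v - 1)%nat).
  set (l0 := filter (fun v => Nat.leb 2 (card_chi E v)) (generation E root n)).
  assert (Hl0 : forall v, In v l0 <-> (gen E root n v /\ (2 <= card_chi E v)%nat)).
  { intros v. unfold l0. rewrite filter_In, in_generation, Nat.leb_le by auto. tauto. }
  assert (Hex : exists s l, NoDup l /\
       (forall v, In v l <-> (gen E root n v /\ (2 <= card_chi E v)%nat)) /\
       s = list_sum (map h l)).
  { exists (list_sum (map h l0)), l0. split; auto.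
    apply NoDup_filter, generation_nodup; auto. }
  destruct (epsilon_spec (inhabits 0%nat) _ Hex) as [l [Hl [Hm ->]]].
  assert (Hp : Permutation l l0).
  { apply NoDup_Permutation; auto. apply NoDup_filter, generation_nodup; auto.
    intros x. rewrite Hm, Hl0. tauto. }
  rewrite (Permutation_list_sum (Permutation_map h Hp)).
  unfold l0. rewrite list_sum_filter.
  - unfold h. rewrite length_flat_map_children. reflexivity.
  - intros x Hx. apply Nat.leb_gt in Hx. unfold h. lia.
Qed.

End Branching.

Lemma branching_sum_eq_iff {V1 V2 : Type}
  (E1 : V1 -> V1 -> Prop) (root1 : V1) (E2 : V2 -> V2 -> Prop) (root2 : V2) :
  rooted_directed_tree E1 root1 -> locally_finite E1 -> leafless E1 ->
  rooted_directed_tree E2 root2 -> locally_finite E2 -> leafless E2 ->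
  (forall n, branching_sum E1 root1 n = branching_sum E2 root2 n) <->
  (forall n, length (generation E1 root1 n) = length (generation E2 root2 n)).
Proof.
  intros T1 lf1 ll1 T2 lf2 ll2.
  pose proof (branching_sum_generation E1 root1 T1 lf1 ll1) as H1.
  pose proof (branching_sum_generation E2 root2 T2 lf2 ll2) as H2.
  split; intros H n.
  - induction n; [reflexivity|]. specialize (H1 n). specialize (H2 n). specialize (H n). lia.
  - specialize (H1 n). specialize (H2 n). pose proof (H n). pose proof (H (S n)). lia.
Qed.

(** * Finite orthonormal bases *)

Definition dotL {V} (L : list V) (f g : V -> R) : R := lsum (fun u => f u * g u) L.
Definition indicator {V} (w : V) : V -> R := fun u => if deq u w then 1 else 0.

Lemma dotL_sym {V} (L : list V) f g : dotL L f g = dotL L g f.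
Proof. unfold dotL. apply lsum_ext; intros; ring. Qed.

Lemma dotL_indicator_r {V} (L : list V) f w : NoDup L -> In w L -> dotL L f (indicator w) = f w.
Proof.
  intros HL Hw. rewrite <- (lsum_delta f L w HL Hw). apply lsum_ext.
  intros x _. unfold indicator. destruct (deq x w), (deq w x); subst; try congruence; ring.
Qed.

Section FiniteBasis.
Context {V : Type} (L : list V) (HL : NoDup L) (m : nat) (b : nat -> V -> R).
Hypothesis b_orthonormal : forall i j, (i < m)%nat -> (j < m)%nat ->
  dotL L (b i) (b j) = if deq i j then 1 else 0.

Definition expand (d : nat -> R) : V -> R := fun u => lsum (fun j => b j u * d j) (seq 0 m).

Lemma dotL_expand d i : (i < m)%nat -> dotL L (b i) (expand d) = d i.
Proof.
  intros Hi. unfold dotL, expand.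
  rewrite (lsum_ext _ (fun u => lsum (fun j => b i u * b j u * d j) (seq 0 m))).
  2:{ intros u _. rewrite <- lsum_scal. apply lsum_ext; intros; ring. }
  rewrite lsum_swap, (lsum_ext _ (fun j => if deq i j then d j else 0)).
  - apply lsum_delta; [apply seq_NoDup|apply in_seq; lia].
  - intros j Hj. apply in_seq in Hj. rewrite (lsum_scal_r (d j) (fun x => b i x * b j x)).
    fold (dotL L (b i) (b j)). rewrite b_orthonormal by lia. destruct (deq i j); ring.
Qed.

Lemma dotL_expand_expand d : dotL L (expand d) (expand d) = lsum (fun i => d i * d i) (seq 0 m).
Proof.
  unfold dotL at 1. unfold expand at 1.
  rewrite (lsum_ext _ (fun u => lsum (fun j => d j * (b j u * expand d u)) (seq 0 m))).
  2:{ intros u _. rewrite <- (lsum_scal_r (expand d u)). apply lsum_ext; intros; ring. }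
  rewrite lsum_swap. apply lsum_ext. intros j Hj. apply in_seq in Hj.
  rewrite lsum_scal. fold (dotL L (b j) (expand d)). rewrite dotL_expand by lia. ring.
Qed.

Lemma bessel_inequality x : lsum (fun i => dotL L (b i) x * dotL L (b i) x) (seq 0 m) <= dotL L x x.
Proof.
  set (c := fun i => dotL L (b i) x).
  assert (Hcross : dotL L x (expand c) = lsum (fun i => c i * c i) (seq 0 m)).
  { unfold dotL at 1. unfold expand.
    rewrite (lsum_ext _ (fun u => lsum (fun j => c j * (b j u * x u)) (seq 0 m))).
    2:{ intros u _. rewrite <- lsum_scal. apply lsum_ext; intros; ring. }
    rewrite lsum_swap. apply lsum_ext. intros j _. rewrite lsum_scal. reflexivity. }
  assert (H : 0 <= dotL L (fun u => x u - expand c u) (fun u => x u - expand c u)).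
  { apply lsum_nonneg. intros y _. apply Rle_0_sqr. }
  replace (dotL L (fun u => x u - expand c u) (fun u => x u - expand c u))
    with (dotL L x x - 2 * dotL L x (expand c) + dotL L (expand c) (expand c)) in H
    by (unfold dotL; rewrite <- lsum_scal, <- lsum_minus, <- lsum_plus; apply lsum_ext; intros; ring).
  rewrite dotL_expand_expand, Hcross in H. unfold c in H. lra.
Qed.

Hypothesis m_length : m = length L.

Lemma bessel_indicator u : In u L -> lsum (fun i => b i u * b i u) (seq 0 m) <= 1.
Proof.
  intros Hu. pose proof (bessel_inequality (indicator u)) as H.
  rewrite dotL_indicator_r in H by auto. unfold indicator at 3 in H.
  destruct (deq u u); [|congruence].
  rewrite (lsum_ext _ (fun i => b i u * b i u)) in H; auto.
  intros i _. rewrite dotL_indicator_r; auto.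
Qed.

(* The m Bessel inequalities at the indicators add up to an equality, since m = #L. *)
Lemma complete_diag u : In u L -> lsum (fun i => b i u * b i u) (seq 0 m) = 1.
Proof.
  assert (Hs : lsum (fun u => 1 - lsum (fun i => b i u * b i u) (seq 0 m)) L = 0).
  { rewrite lsum_minus, lsum_swap.
    rewrite (lsum_ext (fun i => lsum (fun x => b i x * b i x) L) (fun _ => 1)).
    - rewrite !lsum_const, length_seq, m_length. ring.
    - intros i Hi. apply in_seq in Hi. fold (dotL L (b i) (b i)). rewrite b_orthonormal by lia.
      destruct (deq i i); congruence. }
  intros Hu. assert (Hn : forall x, In x L -> 0 <= 1 - lsum (fun i => b i x * b i x) (seq 0 m)).
  { intros x Hx. pose proof (bessel_indicator x Hx). lra. }
  pose proof (lsum_nonneg_eq0 _ L Hn Hs u Hu). lra.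
Qed.

(* Bessel at indicator u + t indicator w, for t = 1 and t = -1. *)
Lemma complete_offdiag u w : In u L -> In w L -> u <> w ->
  lsum (fun i => b i u * b i w) (seq 0 m) = 0.
Proof.
  intros Hu Hw Huw.
  assert (K : forall t, lsum (fun i => b i u * b i u) (seq 0 m)
                        + 2 * t * lsum (fun i => b i u * b i w) (seq 0 m)
                        + t * t * lsum (fun i => b i w * b i w) (seq 0 m) <= 1 + t * t).
  { intros t. set (x := fun v => indicator u v + t * indicator w v).
    assert (Hbx : forall i, dotL L (b i) x = b i u + t * b i w).
    { intros i. unfold dotL, x.
      rewrite (lsum_ext _ (fun v => b i v * indicator u v + t * (b i v * indicator w v)))
        by (intros; ring).
      rewrite lsum_plus, lsum_scal. fold (dotL L (b i) (indicator u)) (dotL L (b i) (indicator w)).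
      rewrite !dotL_indicator_r; auto. }
    assert (Hxx : dotL L x x = 1 + t * t).
    { unfold dotL at 1. unfold x.
      rewrite (lsum_ext _ (fun v => (indicator u v + t * indicator w v) * indicator u v
                                    + t * ((indicator u v + t * indicator w v) * indicator w v)))
        by (intros; ring).
      rewrite lsum_plus, lsum_scal.
      fold (dotL L (fun v => indicator u v + t * indicator w v) (indicator u))
           (dotL L (fun v => indicator u v + t * indicator w v) (indicator w)).
      rewrite !dotL_indicator_r by auto. unfold indicator.
      destruct (deq u u), (deq w u), (deq u w), (deq w w); subst; try congruence. ring. }
    pose proof (bessel_inequality x) as H. rewrite Hxx in H.
    rewrite (lsum_ext _ (fun i => (b i u + t * b i w) * (b i u + t * b i w))) in H
      by (intros; rewrite Hbx; auto).
    replace (lsum (fun i => (b i u + t * b i w) * (b i u + t * b i w)) (seq 0 m))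
      with (lsum (fun i => b i u * b i u) (seq 0 m)
            + 2 * t * lsum (fun i => b i u * b i w) (seq 0 m)
            + t * t * lsum (fun i => b i w * b i w) (seq 0 m)) in H
      by (rewrite <- !lsum_scal, <- !lsum_plus; apply lsum_ext; intros; ring).
    exact H. }
  pose proof (K 1). pose proof (K (-1)). rewrite !complete_diag in * by auto. lra.
Qed.

Lemma orthonormal_complete u w : In u L -> In w L ->
  lsum (fun i => b i u * b i w) (seq 0 m) = if deq u w then 1 else 0.
Proof.
  intros Hu Hw. destruct (deq u w) as [<-|Hne]; [apply complete_diag|apply complete_offdiag]; auto.
Qed.

Lemma expand_coefficients h u : In u L -> expand (fun i => dotL L (b i) h) u = h u.
Proof.
  intros Hu. unfold expand, dotL.
  rewrite (lsum_ext _ (fun i => lsum (fun w => b i u * b i w * h w) L)).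
  2:{ intros i _. rewrite <- lsum_scal. apply lsum_ext; intros; ring. }
  rewrite lsum_swap, (lsum_ext _ (fun w => if deq u w then h w else 0)).
  - apply (lsum_delta h); auto.
  - intros w Hw. rewrite (lsum_scal_r (h w) (fun i => b i u * b i w)), orthonormal_complete by auto.
    destruct (deq u w); ring.
Qed.

Lemma parseval x : lsum (fun i => dotL L (b i) x * dotL L (b i) x) (seq 0 m) = dotL L x x.
Proof.
  rewrite (lsum_ext _ (fun i => lsum (fun w => x w * (b i w * dotL L (b i) x)) L)).
  2:{ intros i _. unfold dotL at 1. rewrite <- lsum_scal_r. apply lsum_ext; intros; ring. }
  rewrite lsum_swap. apply lsum_ext. intros w Hw.
  rewrite lsum_scal. fold (expand (fun i => dotL L (b i) x) w). rewrite expand_coefficients; auto.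
Qed.

End FiniteBasis.

Definition zero_fun {V} : V -> R := fun _ => 0.

Definition orthonormal {V} (L : list V) (l : list (V -> R)) : Prop :=
  forall i j, (i < length l)%nat -> (j < length l)%nat ->
    dotL L (nth i l zero_fun) (nth j l zero_fun) = if deq i j then 1 else 0.

Lemma orthonormal_app {V} (L : list V) l1 l2 : orthonormal L l1 -> orthonormal L l2 ->
  (forall x y, In x l1 -> In y l2 -> dotL L x y = 0) -> orthonormal L (l1 ++ l2).
Proof.
  intros H1 H2 H12 i j Hi Hj. rewrite length_app in Hi, Hj.
  destruct (Nat.ltb_spec i (length l1)), (Nat.ltb_spec j (length l1)).
  - rewrite !app_nth1 by auto. apply H1; auto.
  - rewrite app_nth1, app_nth2, H12 by (auto; apply nth_In; lia).
    destruct (deq i j); [lia|reflexivity].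
  - rewrite app_nth2, app_nth1, dotL_sym, H12 by (auto; apply nth_In; lia).
    destruct (deq i j); [lia|reflexivity].
  - rewrite !app_nth2, H2 by lia.
    destruct (deq (i - length l1)%nat (j - length l1)%nat), (deq i j); auto; lia.
Qed.

Lemma orthonormal_map {V} (L L' : list V) (W : (V -> R) -> (V -> R)) l :
  (forall x y, In x l -> In y l -> dotL L' (W x) (W y) = dotL L x y) ->
  orthonormal L l -> orthonormal L' (map W l).
Proof.
  intros HW H i j Hi Hj. rewrite length_map in Hi, Hj.
  rewrite (nth_indep _ zero_fun (W zero_fun)) by (rewrite length_map; auto).
  rewrite (nth_indep _ zero_fun (W zero_fun) (n := j)) by (rewrite length_map; auto).
  rewrite !map_nth, HW by (apply nth_In; auto). apply H; auto.
Qed.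

Lemma orthonormal_flat_map {V A} (L : list V) (f : A -> list (V -> R)) (l : list A) :
  NoDup l -> (forall a, In a l -> orthonormal L (f a)) ->
  (forall a a' x y, In a l -> In a' l -> a <> a' -> In x (f a) -> In y (f a') -> dotL L x y = 0) ->
  orthonormal L (flat_map f l).
Proof.
  induction 1 as [|a l Ha Hl IH]; intros Hf Hc; [intros i j Hi; simpl in Hi; lia|].
  simpl. apply orthonormal_app.
  - apply Hf; left; auto.
  - apply IH; [intros; apply Hf; right; auto|intros; eapply Hc; eauto; right; auto].
  - intros x y Hx Hy. apply in_flat_map in Hy. destruct Hy as [a' [Ha' Hy]].
    apply (Hc a a' x y); auto; [left; auto|right; auto|intros ->; contradiction].
Qed.

Lemma seq_split k j : (j < k)%nat -> seq 0 k = seq 0 j ++ j :: seq (S j) (k - S j).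
Proof. intros H. replace k with (j + (S (k - S j)))%nat at 1 by lia. apply seq_app. Qed.

(* Row j >= 1 of the Helmert matrix: (1, ..., 1, -j, 0, ...) / sqrt (j (j+1)), with j ones.
   For 1 <= j < k these rows are orthonormal and orthogonal to (1, ..., 1). *)
Definition helmert_scale (j : nat) : R := / sqrt (INR j * INR (S j)).
Definition helmert (j s : nat) : R :=
  if Nat.ltb s j then helmert_scale j else if Nat.eqb s j then - INR j * helmert_scale j else 0.

Lemma helmert_scale_sq j : (1 <= j)%nat ->
  helmert_scale j * helmert_scale j = / (INR j * INR (S j)).
Proof.
  intros H. unfold helmert_scale. assert (0 < INR j * INR (S j)).
  { apply Rmult_lt_0_compat; apply lt_0_INR; lia. }
  rewrite <- Rinv_mult, sqrt_sqrt; lra.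
Qed.

Lemma lsum_helmert (F : R -> R) j k : (j < k)%nat -> F 0 = 0 ->
  lsum (fun s => F (helmert j s)) (seq 0 k)
  = INR j * F (helmert_scale j) + F (- INR j * helmert_scale j).
Proof.
  intros Hjk HF. rewrite (seq_split k j Hjk), lsum_app, lsum_cons.
  rewrite (lsum_ext _ (fun _ => F (helmert_scale j))), lsum_const, length_seq.
  - rewrite lsum_eq0; [unfold helmert; rewrite Nat.ltb_irrefl, Nat.eqb_refl; ring|].
    intros s Hs. apply in_seq in Hs. unfold helmert.
    destruct (Nat.ltb_spec s j), (Nat.eqb_spec s j); auto; lia.
  - intros s Hs. apply in_seq in Hs. unfold helmert. destruct (Nat.ltb_spec s j); [auto|lia].
Qed.

Lemma helmert_sum j k : (j < k)%nat -> lsum (helmert j) (seq 0 k) = 0.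
Proof. intros H. rewrite (lsum_helmert (fun x => x)); auto. ring. Qed.

Lemma helmert_orthogonal i j k : (i < j)%nat -> (j < k)%nat ->
  lsum (fun s => helmert i s * helmert j s) (seq 0 k) = 0.
Proof.
  intros H2 H3. rewrite (lsum_ext _ (fun s => helmert i s * helmert_scale j)).
  - rewrite lsum_scal_r, helmert_sum by lia. ring.
  - intros s _. unfold helmert at 2. destruct (Nat.ltb_spec s j); auto.
    unfold helmert. destruct (Nat.ltb_spec s i), (Nat.eqb_spec s i); try lia. ring.
Qed.

Lemma helmert_norm j k : (1 <= j)%nat -> (j < k)%nat ->
  lsum (fun s => helmert j s * helmert j s) (seq 0 k) = 1.
Proof.
  intros H1 H2. rewrite (lsum_helmert (fun x => x * x)) by (auto; ring).
  replace (INR j * (helmert_scale j * helmert_scale j) +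
           - INR j * helmert_scale j * (- INR j * helmert_scale j))
    with ((INR j * INR (S j)) * (helmert_scale j * helmert_scale j)) by (rewrite S_INR; ring).
  rewrite helmert_scale_sq by auto. apply Rinv_r.
  apply Rmult_integral_contrapositive_currified; apply not_0_INR; lia.
Qed.

Lemma helmert_dot i j k : (1 <= i)%nat -> (i < k)%nat -> (1 <= j)%nat -> (j < k)%nat ->
  lsum (fun s => helmert i s * helmert j s) (seq 0 k) = if deq i j then 1 else 0.
Proof.
  intros. destruct (deq i j) as [<-|Hne]; [apply helmert_norm; auto|].
  destruct (Nat.lt_ge_cases i j); [apply helmert_orthogonal; auto|].
  rewrite (lsum_ext _ (fun s => helmert j s * helmert i s)) by (intros; ring).
  apply helmert_orthogonal; lia.
Qed.

Fixpoint index_of {V} (l : list V) (u : V) : nat :=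
  match l with [] => O | a :: l => if deq a u then O else S (index_of l u) end.

Lemma lsum_index_of {V} (F : nat -> R) (c : list V) : NoDup c ->
  lsum (fun u => F (index_of c u)) c = lsum F (seq 0 (length c)).
Proof.
  intros Hc. revert F. induction Hc as [|a c Ha Hc IH]; intros F; auto.
  change (seq 0 (length (a :: c))) with (0%nat :: seq 1 (length c)).
  rewrite !lsum_cons. simpl index_of at 1. destruct (deq a a); [|congruence]. f_equal.
  rewrite <- seq_shift, lsum_map, <- (IH (fun s => F (S s))). apply lsum_ext.
  intros u Hu. simpl index_of. destruct (deq a u); [subst; contradiction|auto].
Qed.

(** * Orthonormal bases of the generations adapted to the shift *)

Section AdaptedBasis.
Context {V : Type} (E : V -> V -> Prop) (root : V).
Hypothesis T : rooted_directed_tree E root.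
Hypothesis lf : locally_finite E.
Hypothesis ll : leafless E.

Definition nchildren (v : V) : R := INR (length (children E v)).

Lemma nchildren_pos v : 0 < nchildren v.
Proof.
  unfold nchildren. rewrite <- card_chi_children by auto. apply lt_0_INR.
  pose proof (card_chi_pos E lf ll v). lia.
Qed.

Lemma sqrt_nchildren_pos v : 0 < sqrt (nchildren v).
Proof. apply sqrt_lt_R0, nchildren_pos. Qed.

Definition spread (b : V -> R) : V -> R :=
  fun u => b (parent E root u) / sqrt (nchildren (parent E root u)).

Definition helmert_at (v : V) (j : nat) : V -> R :=
  fun u => if excluded_middle_informative (In u (children E v))
           then helmert j (index_of (children E v) u) else 0.

Definition helmert_family (v : V) : list (V -> R) :=
  map (helmert_at v) (seq 1 (length (children E v) - 1)).

Definition helmert_generation (n : nat) : list (V -> R) := flat_map helmert_family (generation E root n).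

Fixpoint adapted_list (n : nat) : list (V -> R) :=
  match n with
  | O => [indicator root]
  | S n => map spread (adapted_list n) ++ helmert_generation n
  end.

Lemma dotL_generation_S n f g :
  dotL (generation E root (S n)) f g = lsum (fun v => dotL (children E v) f g) (generation E root n).
Proof. unfold dotL. simpl generation. rewrite lsum_flat_map. reflexivity. Qed.

Lemma spread_children b v u : In u (children E v) -> spread b u = b v / sqrt (nchildren v).
Proof. intros H. unfold spread. rewrite (parent_children E root T lf v u H). reflexivity. Qed.

Lemma dotL_spread n b b' :
  dotL (generation E root (S n)) (spread b) (spread b') = dotL (generation E root n) b b'.
Proof.
  rewrite dotL_generation_S. unfold dotL at 2. apply lsum_ext. intros v _. unfold dotL.
  rewrite (lsum_ext _ (fun _ => b v * b' v / nchildren v)).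
  - rewrite lsum_const. fold (nchildren v). pose proof (nchildren_pos v). field. lra.
  - intros u Hu. rewrite !(spread_children _ v u Hu).
    pose proof (sqrt_sqrt (nchildren v)) as Hs. pose proof (sqrt_nchildren_pos v).
    pose proof (nchildren_pos v). rewrite <- Hs at 3 by lra. field. lra.
Qed.

Lemma helmert_at_out v j u : ~ In u (children E v) -> helmert_at v j u = 0.
Proof. intros H. unfold helmert_at. destruct (excluded_middle_informative _); tauto. Qed.

Lemma helmert_at_children v j u :
  In u (children E v) -> helmert_at v j u = helmert j (index_of (children E v) u).
Proof. intros H. unfold helmert_at. destruct (excluded_middle_informative _); tauto. Qed.

Lemma in_helmert_family v h : In h (helmert_family v) ->
  exists j, (1 <= j)%nat /\ (j < length (children E v))%nat /\ h = helmert_at v j.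
Proof.
  unfold helmert_family. intros H. apply in_map_iff in H. destruct H as [j [<- Hj]].
  apply in_seq in Hj. exists j. repeat split; lia.
Qed.

Lemma sum_helmert_family v h v' : In h (helmert_family v) -> lsum h (children E v') = 0.
Proof.
  intros Hh. destruct (in_helmert_family v h Hh) as [j [H1 [H2 ->]]].
  destruct (deq v v') as [<-|Hne].
  - rewrite (lsum_ext _ (fun u => helmert j (index_of (children E v) u))) by apply helmert_at_children.
    rewrite (lsum_index_of (helmert j)) by apply children_nodup, lf. apply helmert_sum; auto.
  - apply lsum_eq0. intros u Hu. apply helmert_at_out. intros Hu'.
    apply Hne, (children_disjoint E root T lf v v' u); auto.
Qed.

Lemma dotL_spread_helmert n b h : In h (helmert_generation n) ->
  dotL (generation E root (S n)) (spread b) h = 0.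
Proof.
  intros Hh. apply in_flat_map in Hh. destruct Hh as [v [_ Hh]].
  rewrite dotL_generation_S. apply lsum_eq0. intros v' _. unfold dotL.
  rewrite (lsum_ext _ (fun u => b v' / sqrt (nchildren v') * h u)).
  - rewrite lsum_scal, (sum_helmert_family v h v' Hh). ring.
  - intros u Hu. rewrite (spread_children b v' u Hu). reflexivity.
Qed.

Lemma dotL_generation_S_children n v f g : In v (generation E root n) ->
  (forall u, ~ In u (children E v) -> f u = 0) ->
  dotL (generation E root (S n)) f g = dotL (children E v) f g.
Proof.
  intros Hv Hf. rewrite dotL_generation_S.
  rewrite (lsum_ext _ (fun v' => if deq v v' then dotL (children E v') f g else 0)).
  - apply (lsum_delta (fun v0 => dotL (children E v0) f g)); auto. apply generation_nodup; auto.
  - intros v' _. destruct (deq v v') as [|Hne]; auto. apply lsum_eq0. intros u Hu.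
    rewrite Hf; [ring|]. intros Hu'. apply Hne, (children_disjoint E root T lf v v' u); auto.
Qed.

Lemma orthonormal_helmert_family n v : In v (generation E root n) ->
  orthonormal (generation E root (S n)) (helmert_family v).
Proof.
  intros Hv i j Hi Hj. unfold helmert_family in *. rewrite length_map, length_seq in Hi, Hj.
  rewrite (nth_indep _ zero_fun (helmert_at v 0)) by (rewrite length_map, length_seq; auto).
  rewrite (nth_indep _ zero_fun (helmert_at v 0) (n := j)) by (rewrite length_map, length_seq; auto).
  rewrite !map_nth, !seq_nth by auto.
  rewrite (dotL_generation_S_children n v) by (auto; intros; apply helmert_at_out; auto).
  set (F := fun s => helmert (1 + i) s * helmert (1 + j) s).
  unfold dotL. rewrite (lsum_ext _ (fun u => F (index_of (children E v) u)))
    by (intros; unfold F; rewrite !helmert_at_children; auto).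
  rewrite (lsum_index_of F) by apply children_nodup, lf.
  unfold F. rewrite helmert_dot by lia.
  destruct (deq (1 + i)%nat (1 + j)%nat), (deq i j); auto; lia.
Qed.

Lemma orthonormal_helmert_generation n :
  orthonormal (generation E root (S n)) (helmert_generation n).
Proof.
  apply orthonormal_flat_map; [apply generation_nodup; auto| |].
  { intros; apply (orthonormal_helmert_family n); auto. }
  intros a a' x y _ _ Hne Hx Hy. destruct (in_helmert_family a x Hx) as [j [_ [_ ->]]].
  destruct (in_helmert_family a' y Hy) as [j' [_ [_ ->]]].
  apply lsum_eq0. intros u _. destruct (excluded_middle_informative (In u (children E a))).
  - rewrite (helmert_at_out a' j' u); [ring|]. intros H.
    apply Hne, (children_disjoint E root T lf a a' u); auto.
  - rewrite helmert_at_out by auto. ring.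
Qed.

Lemma orthonormal_adapted_list n : orthonormal (generation E root n) (adapted_list n).
Proof.
  induction n as [|n IH].
  - intros i j Hi Hj. simpl in Hi, Hj. replace i with 0%nat by lia. replace j with 0%nat by lia.
    simpl. unfold dotL, indicator. simpl. destruct (deq root root), (deq 0%nat 0%nat); try congruence. ring.
  - apply orthonormal_app.
    + apply (orthonormal_map (generation E root n)); auto. intros; apply dotL_spread.
    + apply orthonormal_helmert_generation.
    + intros x y Hx Hy. apply in_map_iff in Hx. destruct Hx as [b [<- _]]. apply dotL_spread_helmert; auto.
Qed.

Lemma length_adapted_list n : length (adapted_list n) = length (generation E root n).
Proof.
  induction n as [|n IH]; auto. simpl adapted_list.
  rewrite length_app, length_map, IH. unfold helmert_generation.
  rewrite length_flat_map. simpl generation.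
  rewrite <- (length_flat_map_children E lf ll (generation E root n)).
  rewrite Nat.add_comm. f_equal. f_equal. apply map_ext. intros v. unfold helmert_family.
  rewrite length_map, length_seq, card_chi_children by auto. reflexivity.
Qed.

Definition gsize (n : nat) : nat := length (generation E root n).
Definition adapted (n i : nat) : V -> R := nth i (adapted_list n) zero_fun.

Lemma adapted_orthonormal n i j : (i < gsize n)%nat -> (j < gsize n)%nat ->
  dotL (generation E root n) (adapted n i) (adapted n j) = if deq i j then 1 else 0.
Proof. unfold gsize, adapted. rewrite <- length_adapted_list. apply orthonormal_adapted_list. Qed.

Lemma gsize_le n : (gsize n <= gsize (S n))%nat.
Proof.
  unfold gsize. rewrite <- !length_adapted_list. simpl adapted_list. rewrite length_app, length_map. lia.
Qed.

Lemma adapted_S_lt n i : (i < gsize n)%nat -> adapted (S n) i = spread (adapted n i).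
Proof.
  intros H. unfold adapted, gsize in *. rewrite <- length_adapted_list in H. simpl adapted_list.
  rewrite app_nth1 by (rewrite length_map; auto).
  rewrite (nth_indep _ zero_fun (spread zero_fun)) by (rewrite length_map; auto). apply map_nth.
Qed.

Lemma adapted_S_ge n i : (gsize n <= i)%nat -> (i < gsize (S n))%nat ->
  In (adapted (S n) i) (helmert_generation n).
Proof.
  intros H1 H2. unfold adapted, gsize in *. rewrite <- !length_adapted_list in *. simpl adapted_list in *.
  rewrite length_app, length_map in H2. rewrite app_nth2 by (rewrite length_map; auto).
  apply nth_In. rewrite length_map. lia.
Qed.

Variable q : R.

Definition shift_re (g : V -> R) : V -> R :=
  fun u => if excluded_middle_informative (exists v, E v u)
           then dirichlet_weight E root q u * g (parent E root u) else 0.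

Lemma Cre_shift f u : Cre (dirichlet_shift E root q f u) = shift_re (fun v => Cre (f v)) u.
Proof. unfold dirichlet_shift, shift_re. destruct (excluded_middle_informative _); reflexivity. Qed.

Lemma Cim_shift f u : Cim (dirichlet_shift E root q f u) = shift_re (fun v => Cim (f v)) u.
Proof. unfold dirichlet_shift, shift_re. destruct (excluded_middle_informative _); reflexivity. Qed.

Lemma shift_re_root g : shift_re g root = 0.
Proof.
  unfold shift_re. destruct (excluded_middle_informative _) as [[v Hv]|]; auto.
  exfalso; eapply no_parent_root; eauto.
Qed.

Lemma shift_re_spread n g u : In u (generation E root (S n)) ->
  shift_re g u = sqrt (dirichlet_factor q n) * spread g u.
Proof.
  intros Hu. destruct (generation_S_parent E root T lf n u Hu) as [Hp Hc].
  set (p := parent E root u) in *.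
  rewrite (spread_children g p u Hc). unfold shift_re.
  destruct (excluded_middle_informative _) as [_|Hn];
    [|exfalso; apply Hn; exists p; apply in_children; auto].
  rewrite (dirichlet_weight_children E root T lf q p u Hc). fold p. unfold child_weight.
  rewrite card_chi_children, (depth_generation E root T lf n p Hp) by auto. fold (nchildren p).
  pose proof (sqrt_nchildren_pos p). field. lra.
Qed.

Lemma dotL_shift_re n f g :
  dotL (generation E root (S n)) f (shift_re g) =
  sqrt (dirichlet_factor q n) * dotL (generation E root (S n)) f (spread g).
Proof.
  unfold dotL. rewrite <- lsum_scal. apply lsum_ext. intros u Hu. rewrite (shift_re_spread n g u Hu). ring.
Qed.

Lemma dotL_adapted_shift_re_lt n i g : (i < gsize n)%nat ->
  dotL (generation E root (S n)) (adapted (S n) i) (shift_re g) =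
  sqrt (dirichlet_factor q n) * dotL (generation E root n) (adapted n i) g.
Proof. intros Hi. rewrite dotL_shift_re, adapted_S_lt, dotL_spread by auto. reflexivity. Qed.

Lemma dotL_adapted_shift_re_ge n i g : (gsize n <= i)%nat -> (i < gsize (S n))%nat ->
  dotL (generation E root (S n)) (adapted (S n) i) (shift_re g) = 0.
Proof.
  intros H1 H2. rewrite dotL_shift_re, dotL_sym, dotL_spread_helmert by (apply adapted_S_ge; auto).
  ring.
Qed.

Lemma expand_spread m (b : nat -> V -> R) d u :
  expand m (fun i => spread (b i)) d u = spread (expand m b d) u.
Proof. unfold expand, spread. unfold Rdiv. rewrite <- lsum_scal_r. apply lsum_ext. intros; ring. Qed.

End AdaptedBasis.

(** * The unitary between two trees with equal generation sizes *)

Lemma dotL_linear_r {V} (L : list V) f a (g1 g2 : V -> R) :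
  dotL L f (fun v => a * g1 v + g2 v) = a * dotL L f g1 + dotL L f g2.
Proof. unfold dotL. rewrite <- lsum_scal, <- lsum_plus. apply lsum_ext. intros; ring. Qed.

Lemma sumsq_dotL {V} (f : V -> C) L :
  sumsq f L = dotL L (fun v => Cre (f v)) (fun v => Cre (f v))
              + dotL L (fun v => Cim (f v)) (fun v => Cim (f v)).
Proof. rewrite sumsq_lsum. unfold dotL. rewrite <- lsum_plus. reflexivity. Qed.

Section Transfer.
Context {V1 V2 : Type} (E1 : V1 -> V1 -> Prop) (root1 : V1) (E2 : V2 -> V2 -> Prop) (root2 : V2).
Hypothesis T1 : rooted_directed_tree E1 root1.
Hypothesis lf1 : locally_finite E1.
Hypothesis ll1 : leafless E1.
Hypothesis T2 : rooted_directed_tree E2 root2.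
Hypothesis lf2 : locally_finite E2.
Hypothesis ll2 : leafless E2.
Hypothesis gsize_eq : forall n, gsize E1 root1 n = gsize E2 root2 n.

Definition coefficients (n : nat) (g : V1 -> R) (i : nat) : R :=
  dotL (generation E1 root1 n) (adapted E1 root1 n i) g.

(* The real map sending the i-th adapted basis vector of depth n of the first tree to the
   i-th one of the second tree. *)
Definition transfer_re (g : V1 -> R) (u : V2) : R :=
  expand (gsize E2 root2 (depth E2 root2 u)) (adapted E2 root2 (depth E2 root2 u))
         (coefficients (depth E2 root2 u) g) u.

Lemma transfer_re_generation n g u : In u (generation E2 root2 n) ->
  transfer_re g u = expand (gsize E2 root2 n) (adapted E2 root2 n) (coefficients n g) u.
Proof. intros H. unfold transfer_re. rewrite (depth_generation E2 root2 T2 lf2 n u H). reflexivity. Qed.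

Lemma dotL_transfer_re n g :
  dotL (generation E2 root2 n) (transfer_re g) (transfer_re g) = dotL (generation E1 root1 n) g g.
Proof.
  set (x := expand (gsize E2 root2 n) (adapted E2 root2 n) (coefficients n g)).
  transitivity (dotL (generation E2 root2 n) x x).
  { unfold dotL. apply lsum_ext. intros u Hu. rewrite (transfer_re_generation n g u Hu). reflexivity. }
  unfold x. rewrite dotL_expand_expand by (intros; apply adapted_orthonormal; auto).
  rewrite <- gsize_eq. apply (parseval (generation E1 root1 n)); auto using generation_nodup.
  intros; apply adapted_orthonormal; auto.
Qed.

Lemma transfer_re_linear a g1 g2 u :
  transfer_re (fun v => a * g1 v + g2 v) u = a * transfer_re g1 u + transfer_re g2 u.
Proof.
  unfold transfer_re, expand, coefficients. rewrite <- lsum_scal, <- lsum_plus. apply lsum_ext.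
  intros i _. rewrite dotL_linear_r. ring.
Qed.

Variable q : R.

(* Only the first [gsize n] coefficients at depth n+1 survive the shift. *)
Lemma transfer_re_shift_generation n g u : In u (generation E2 root2 (S n)) ->
  transfer_re (shift_re E1 root1 q g) u
  = sqrt (dirichlet_factor q n) * spread E2 root2 (transfer_re g) u.
Proof.
  intros Hu. rewrite (transfer_re_generation (S n) _ u Hu).
  pose proof (gsize_le E2 root2 lf2 ll2 n).
  unfold expand. replace (gsize E2 root2 (S n))
    with (gsize E2 root2 n + (gsize E2 root2 (S n) - gsize E2 root2 n))%nat by lia.
  rewrite seq_app, lsum_app, (lsum_eq0 _ (seq (0 + gsize E2 root2 n) _)), Rplus_0_r.
  - rewrite (lsum_ext _ (fun i => sqrt (dirichlet_factor q n) *
                               (spread E2 root2 (adapted E2 root2 n i) u * coefficients n g i))).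
    + rewrite lsum_scal. f_equal.
      fold (expand (gsize E2 root2 n) (fun i => spread E2 root2 (adapted E2 root2 n i))
                   (coefficients n g) u).
      rewrite expand_spread. unfold spread. rewrite (transfer_re_generation n g); auto.
      apply generation_S_parent in Hu; tauto.
    + intros i Hi. apply in_seq in Hi. unfold coefficients.
      rewrite (adapted_S_lt E2 root2 lf2 ll2 n i), (dotL_adapted_shift_re_lt E1 root1 T1 lf1 ll1 q n i)
        by (rewrite ?gsize_eq; lia). ring.
  - intros i Hi. apply in_seq in Hi. unfold coefficients.
    rewrite (dotL_adapted_shift_re_ge E1 root1 T1 lf1 ll1 q n i) by (rewrite !gsize_eq; lia). ring.
Qed.

Lemma transfer_re_shift_root g : transfer_re (shift_re E1 root1 q g) root2 = 0.
Proof.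
  rewrite (transfer_re_generation 0); [|left; reflexivity].
  apply lsum_eq0. intros i _. unfold coefficients, dotL. simpl. rewrite shift_re_root by auto. ring.
Qed.

Lemma transfer_re_shift g u :
  transfer_re (shift_re E1 root1 q g) u = shift_re E2 root2 q (transfer_re g) u.
Proof.
  pose proof (in_generation_depth E2 root2 T2 lf2 u) as Hu.
  destruct (depth E2 root2 u) as [|n].
  - destruct Hu as [<-|[]]. rewrite transfer_re_shift_root, shift_re_root; auto.
  - rewrite (transfer_re_shift_generation n), (shift_re_spread E2 root2 T2 lf2 ll2 q n _ u Hu); auto.
Qed.

Definition transfer (f : V1 -> C) : V2 -> C :=
  fun u => mkC (transfer_re (fun v => Cre (f v)) u) (transfer_re (fun v => Cim (f v)) u).

Lemma sumsq_transfer_upto N f :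
  sumsq (transfer f) (generations_upto E2 root2 N) = sumsq f (generations_upto E1 root1 N).
Proof.
  unfold generations_upto. rewrite !sumsq_lsum, !lsum_flat_map. apply lsum_ext. intros n _.
  rewrite <- !sumsq_lsum, !sumsq_dotL. unfold transfer; simpl. rewrite !dotL_transfer_re. reflexivity.
Qed.

Lemma in_l2_transfer f : in_l2 f -> in_l2 (transfer f).
Proof.
  intros H. apply (in_l2_generations E1 root1 T1 lf1) in H as [M HM].
  apply (in_l2_generations E2 root2 T2 lf2). exists M. intros N. rewrite sumsq_transfer_upto. auto.
Qed.

Lemma sqnorm_is_transfer f s : sqnorm_is f s -> sqnorm_is (transfer f) s.
Proof.
  intros H. apply (sqnorm_is_generations E1 root1 T1 lf1) in H as [Hub Hlub].
  apply (sqnorm_is_generations E2 root2 T2 lf2). split.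
  - intros x [N ->]. rewrite sumsq_transfer_upto. apply Hub. eauto.
  - intros b Hb. apply Hlub. intros x [N ->]. rewrite <- sumsq_transfer_upto. apply Hb; eauto.
Qed.

Lemma transfer_linear (a : C) f g u :
  transfer (fun v => Cadd (Cmul a (f v)) (g v)) u = Cadd (Cmul a (transfer f u)) (transfer g u).
Proof.
  unfold transfer. apply Ceq; simpl.
  - transitivity (transfer_re (fun v => Cre a * Cre (f v) + (- Cim a * Cim (f v) + Cre (g v))) u).
    { f_equal; apply functional_extensionality; intros; simpl; ring. }
    rewrite !transfer_re_linear. ring.
  - transitivity (transfer_re (fun v => Cre a * Cim (f v) + (Cim a * Cre (f v) + Cim (g v))) u).
    { f_equal; apply functional_extensionality; intros; simpl; ring. }
    rewrite !transfer_re_linear. ring.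
Qed.

Lemma transfer_shift f u :
  transfer (dirichlet_shift E1 root1 q f) u = dirichlet_shift E2 root2 q (transfer f) u.
Proof.
  apply Ceq; [rewrite Cre_shift|rewrite Cim_shift]; unfold transfer at 1; simpl;
    rewrite <- transfer_re_shift; f_equal; apply functional_extensionality; intros v;
    [apply Cre_shift|apply Cim_shift].
Qed.

End Transfer.

Lemma transfer_re_inverse {V1 V2 : Type}
  (E1 : V1 -> V1 -> Prop) (root1 : V1) (E2 : V2 -> V2 -> Prop) (root2 : V2) :
  rooted_directed_tree E1 root1 -> locally_finite E1 -> leafless E1 ->
  rooted_directed_tree E2 root2 -> locally_finite E2 -> leafless E2 ->
  (forall n, gsize E1 root1 n = gsize E2 root2 n) ->
  forall h u, transfer_re E1 root1 E2 root2 (transfer_re E2 root2 E1 root1 h) u = h u.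
Proof.
  intros T1 lf1 ll1 T2 lf2 ll2 Hsize h u. set (n := depth E2 root2 u).
  assert (Hu : In u (generation E2 root2 n)) by (apply in_generation_depth; auto).
  rewrite (transfer_re_generation E1 root1 E2 root2 T2 lf2 n _ u Hu).
  rewrite <- (expand_coefficients (generation E2 root2 n) (generation_nodup E2 root2 T2 lf2 n)
               (gsize E2 root2 n) (adapted E2 root2 n) (adapted_orthonormal E2 root2 T2 lf2 ll2 n)
               eq_refl h u Hu).
  unfold expand. apply lsum_ext. intros j Hj. apply in_seq in Hj. f_equal.
  unfold coefficients.
  transitivity (dotL (generation E1 root1 n) (adapted E1 root1 n j)
                     (expand (gsize E1 root1 n) (adapted E1 root1 n) (coefficients E2 root2 n h))).
  - unfold dotL. apply lsum_ext. intros w Hw.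
    rewrite (transfer_re_generation E2 root2 E1 root1 T1 lf1 n h w Hw). reflexivity.
  - apply (dotL_expand (generation E1 root1 n)); [apply adapted_orthonormal; auto|].
    rewrite Hsize. lia.
Qed.

Lemma unitarily_equivalent_generation_length {V1 V2 : Type}
  (E1 : V1 -> V1 -> Prop) (root1 : V1) (E2 : V2 -> V2 -> Prop) (root2 : V2) (q : R) :
  1 < q ->
  rooted_directed_tree E1 root1 -> locally_finite E1 -> leafless E1 ->
  rooted_directed_tree E2 root2 -> locally_finite E2 -> leafless E2 ->
  unitarily_equivalent (dirichlet_shift E1 root1 q) (dirichlet_shift E2 root2 q) ->
  forall n, length (generation E1 root1 n) = length (generation E2 root2 n).
Proof.
  intros hq T1 lf1 ll1 T2 lf2 ll2 [U [U_l2 [U_linear [U_isometric [U_surjective U_intertwines]]]]].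
  exact (generation_length_eq E1 root1 E2 root2 T1 lf1 ll1 T2 lf2 ll2 q hq
           U U_l2 U_linear U_isometric U_surjective U_intertwines).
Qed.

Lemma generation_length_unitarily_equivalent {V1 V2 : Type}
  (E1 : V1 -> V1 -> Prop) (root1 : V1) (E2 : V2 -> V2 -> Prop) (root2 : V2) (q : R) :
  rooted_directed_tree E1 root1 -> locally_finite E1 -> leafless E1 ->
  rooted_directed_tree E2 root2 -> locally_finite E2 -> leafless E2 ->
  (forall n, length (generation E1 root1 n) = length (generation E2 root2 n)) ->
  unitarily_equivalent (dirichlet_shift E1 root1 q) (dirichlet_shift E2 root2 q).
Proof.
  intros T1 lf1 ll1 T2 lf2 ll2 Hlen.
  assert (Hlen' : forall n, gsize E2 root2 n = gsize E1 root1 n) by (intros; symmetry; apply Hlen).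
  exists (transfer E1 root1 E2 root2). split; [|split; [|split; [|split]]].
  - apply in_l2_transfer; auto.
  - intros; apply transfer_linear.
  - intros; apply sqnorm_is_transfer; auto.
  - intros g Hg. exists (transfer E2 root2 E1 root1 g). split; [apply in_l2_transfer; auto|].
    intros u. unfold transfer. apply Ceq; simpl; rewrite transfer_re_inverse; auto.
  - intros; apply transfer_shift; auto.
Qed.

Theorem mainTheorem1
  (q : nat) (hq : (2 <= q)%nat)
  (V1 : Type) (E1 : V1 -> V1 -> Prop) (root1 : V1)
  (T1 : rooted_directed_tree E1 root1) (lf1 : locally_finite E1)
  (ll1 : leafless E1) (ci1 : countably_infinite_type (V := V1))
  (V2 : Type) (E2 : V2 -> V2 -> Prop) (root2 : V2)
  (T2 : rooted_directed_tree E2 root2) (lf2 : locally_finite E2)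
  (ll2 : leafless E2) (ci2 : countably_infinite_type (V := V2)) :
  unitarily_equivalent (dirichlet_shift E1 root1 (INR q))
                       (dirichlet_shift E2 root2 (INR q))
  <-> (forall n : nat, branching_sum E1 root1 n = branching_sum E2 root2 n).
Proof.
  assert (hq1 : 1 < INR q) by (apply (lt_INR 1); lia).
  rewrite (branching_sum_eq_iff E1 root1 E2 root2) by auto.
  split.
  - apply unitarily_equivalent_generation_length; auto.
  - apply generation_length_unitarily_equivalent; auto.
Qed.
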